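(* A functional $F\colon\Sigma^{**}\to\mathcal B$ is $\Sigma^{**}$-restricted polynomial-time computable if and only if it has a total polynomial-time computable extension $\tilde F\colon\mathcal B\to\mathcal B$; i.e. $\mathrm P(\Sigma^{**})=\mathrm P|_{\Sigma^{**}}$.
   Context: $\Sigma=\{0,1\}$, $\mathcal B=(\Sigma^* )^{\Sigma^*}$ is the set of total string functions; $\Sigma^{**}$ is the set of length-monotone $\varphi\in\mathcal B$, i.e. $|\mathbf a|\le|\mathbf b|\Rightarrow|\varphi(\mathbf a)|\le|\varphi(\mathbf b)|$. An oracle Turing machine $M^?$ with oracle $\varphi$ replaces, upon entering its query state, the query-tape content $\mathbf b$ by $\varphi(\mathbf b)$ in one time step; $\operatorname{time}_{M^\varphi}(\mathbf a)$ is its number of steps on input $\mathbf a$. $M^?$ computes $F\colon A\to\mathcal B$ if $M^\varphi=F(\varphi)$ for all $\varphi\in A$. The size function is $|\varphi|(n)=\max\{|\varphi(\mathbf a)|:|\mathbf a|\le n\}$. Second-order polynomials are the smallest class of functions $\mathbb N^{\mathbb N}\times\mathbb N\to\mathbb N$ containing all $(l,n)\mapsto p(n)$ for polynomials $p$ with natural coefficients and closed under pointwise sum, pointwise product, and $P\mapsto P^+$, $P^+(l,n)=l(P(l,n))$. For $A\subseteq\mathcal B$, $F\colon A\to\mathcal B$ is $A$-restricted polynomial-time computable if some machine computing $F$ satisfies $\operatorname{time}_{M^\varphi}(\mathbf a)\le P(|\varphi|,|\mathbf a|)$ for all $\varphi\in A$, $\mathbf a\in\Sigma^*$, for some second-order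 polynomial $P$. A total functional is polynomial-time computable if this holds with $A=\mathcal B$. *)

From mathcomp Require Import all_boot.
Set Implicit Arguments. Unset Strict Implicit. Unset Printing Implicit Defensive.

Notation str := (seq bool).

(** Length-monotone functions: Sigma^{**}. *)
Definition length_monotone (phi : str -> str) : Prop :=
  forall a b : str, size a <= size b -> size (phi a) <= size (phi b).

Fixpoint strings_upto (n : nat) : seq str :=
  match n with
  | 0 => [:: [::]]
  | n'.+1 => [:: [::]] ++ [seq x :: s | x <- [:: false; true], s <- strings_upto n']
  end.

Definition size_fun (phi : str -> str) (n : nat) : nat :=
  \max_(a <- strings_upto n) size (phi a).

Inductive sopoly : Type :=
  | SPpoly : seq nat -> sopoly
  | SPadd  : sopoly -> sopoly -> sopoly
  | SPmul  : sopoly -> sopoly -> sopoly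
  | SPapp  : sopoly -> sopoly.

Fixpoint sopoly_eval (P : sopoly) (l : nat -> nat) (n : nat) : nat :=
  match P with
  | SPpoly cs => \sum_(i < size cs) nth 0 cs i * n ^ i
  | SPadd P1 P2 => sopoly_eval P1 l n + sopoly_eval P2 l n
  | SPmul P1 P2 => sopoly_eval P1 l n * sopoly_eval P2 l n
  | SPapp P1 => l (sopoly_eval P1 l n)
  end.

(** Tape alphabet {blank,0,1} = option bool.
    Tapes are one-way infinite (cells indexed by nat), represented by their
    finite content (everything beyond is blank) and the head position.
    Tape 0 = input tape, tape 1 = query tape, tape 2 = output tape,
    tapes 3 .. 3+k-1 = work tapes. *)
Definition sym := option bool.
Inductive move := MoveL | MoveS | MoveR.
Definition tape := (seq sym * nat)%type.
Definition tape0 : tape := ([::], 0).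
Definition action := (sym * move)%type.

Record OTM := {
  otm_Q : finType;
  otm_k : nat;                      (* number of work tapes *)
  otm_start : otm_Q;
  otm_halt : otm_Q;
  otm_query : otm_Q;
  otm_answer : otm_Q;               (* state after an oracle call *)
  otm_delta : otm_Q -> seq sym -> otm_Q * seq action
}.

Definition ntapes (M : OTM) := (otm_k M).+3.

Definition read (t : tape) : sym := nth None t.1 t.2.

Definition do_action (a : action) (t : tape) : tape :=
  let s := set_nth None t.1 t.2 a.1 in
  match a.2 with
  | MoveL => (s, t.2.-1)
  | MoveS => (s, t.2)
  | MoveR => (s, t.2.+1)
  end.

Fixpoint contents (s : seq sym) : str :=
  match s with
  | Some b :: s' => b :: contents s'
  | _ => [::]
  end.

Definition encode (a : str) : tape := (map Some a, 0).

Definition config (M : OTM) := (otm_Q M * seq tape)%type.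

Definition init (M : OTM) (a : str) : config M :=
  (otm_start M, encode a :: nseq (ntapes M).-1 tape0).

Definition step (M : OTM) (phi : str -> str) (c : config M) : config M :=
  if c.1 == otm_halt M then c
  else if c.1 == otm_query M then
    (otm_answer M, set_nth tape0 c.2 1 (encode (phi (contents (nth tape0 c.2 1).1))))
  else
    let (q', acts) := otm_delta (c.1) (map read c.2) in
    (q', mkseq (fun i => do_action (nth (None, MoveS) acts i) (nth tape0 c.2 i))
               (size c.2)).

Definition output (M : OTM) (c : config M) : str := contents (nth tape0 c.2 2).1.

(** Since halting configurations are fixed by [step], "M^phi halts on a
    within t steps" is "the configuration after t steps is halting". *)
Definition run (M : OTM) (phi : str -> str) (a : str) (t : nat) : config M :=
  iter t (step phi) (init M a).

Definition computes_in_time (A : (str -> str) -> Prop)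
    (F : (str -> str) -> str -> str) (M : OTM) (P : sopoly) : Prop :=
  forall phi, A phi -> forall a : str,
    let c := run M phi a (sopoly_eval P (size_fun phi) (size a)) in
    c.1 = otm_halt M /\ output c = F phi a.

Definition restricted_polytime (A : (str -> str) -> Prop)
    (F : (str -> str) -> str -> str) : Prop :=
  exists (M : OTM) (P : sopoly), computes_in_time A F M P.

Definition polytime (F : (str -> str) -> str -> str) : Prop :=
  restricted_polytime (fun _ => True) F.

From HB Require Import structures.
From mathcomp Require Import all_boot zify.
From Stdlib Require Import FunctionalExtensionality.
Set Implicit Arguments. Unset Strict Implicit. Unset Printing Implicit Defensive.

(* Restriction gives one direction.  Conversely, let M compute F on length-monotone oracles in
   time P.  For such an oracle |phi|(n) = |phi(0^n)|, so a machine can compute a clock value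
   N >= P(|phi|, |a|) by K rounds of x |-> (x + |phi(0^x)| + 2)^2 starting from |a| + 2, where K
   depends only on P; it then simulates M for at most N steps.  For an arbitrary oracle one still
   has |phi(0^x)| <= |phi|(x), so N, and with it the running time, is bounded by a second-order
   polynomial. *)

(** * Clock values and second-order polynomials *)

Definition clock_step (l : nat -> nat) (x : nat) := (x + l x + 2) * (x + l x + 2).

Definition clock (l : nat -> nat) (n k : nat) := iter k (clock_step l) n.+2.

Lemma clock_step_ge l x : [/\ x <= clock_step l x, l x <= clock_step l x & x * x <= clock_step l x].
Proof. by rewrite /clock_step; split; nia. Qed.

Lemma clock_le l l' n k : (forall x, l x <= l' x) -> {homo l' : x y / x <= y} ->
  clock l n k <= clock l' n k.
Proof.
move=> le_l mono_l'; rewrite /clock; elim: k => //= k.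
move: (iter k (clock_step l) _) (iter k (clock_step l') _) => x y le_xy.
have le_lxy : l x <= l' y := leq_trans (le_l x) (mono_l' _ _ le_xy).
by apply: leq_mul; rewrite !leq_add2r leq_add.
Qed.

Lemma clock_mono l n : {homo clock l n : k k' / k <= k'}.
Proof.
move=> k k' /subnK <-; elim: (k' - k) => // d IH.
by rewrite addSn /clock iterS; apply: leq_trans IH _; case: (clock_step_ge l (clock l n (d + k))).
Qed.

Lemma clock_ge_size l n k : n.+2 <= clock l n k.
Proof. exact: (clock_mono l n (leq0n k)). Qed.

Lemma clock_ge_pow l n k : n.+2 ^ (2 ^ k) <= clock l n k.
Proof.
elim: k => [|k IH] /=; first by rewrite expn1.
rewrite expnS mulnC expnM (expnS _ 1) expn1 /=.
by case: (clock_step_ge l (clock l n k)) => _ _; apply: leq_trans; apply: leq_mul.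
Qed.

Fixpoint sopoly_weight (P : sopoly) : nat :=
  match P with
  | SPpoly cs => size cs + \sum_(i < size cs) nth 0 cs i
  | SPadd P1 P2 | SPmul P1 P2 => (maxn (sopoly_weight P1) (sopoly_weight P2)).+1
  | SPapp P1 => (sopoly_weight P1).+1
  end.

Lemma leq_expn2r a b e : a <= b -> a ^ e <= b ^ e.
Proof. by case: e => // e; rewrite leq_exp2r. Qed.

Lemma poly_le_clock l n cs :
  \sum_(i < size cs) nth 0 cs i * n ^ i <= clock l n (size cs + \sum_(i < size cs) nth 0 cs i).
Proof.
set d := size cs; set C := \sum_(i < d) nth 0 cs i.
have le_sum : \sum_(i < d) nth 0 cs i * n ^ i <= C * n.+2 ^ d.
  rewrite /C big_distrl /=; apply: leq_sum => i _; apply: leq_mul => //.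
  apply: leq_trans (leq_pexp2l _ (ltnW (ltn_ord i))) => //.
  by apply: leq_expn2r; lia.
apply: leq_trans le_sum (leq_trans _ (clock_ge_pow l n _)).
apply: leq_trans (leq_pexp2l _ (ltnW (ltn_expl (d + C) (isT : 1 < 2)))) => //.
rewrite expnD mulnC leq_mul2l; apply/orP; right.
exact: leq_trans (ltnW (ltn_expl C (isT : 1 < 2))) (leq_expn2r _ _).
Qed.

Lemma sopoly_le_clock l n P : {homo l : x y / x <= y} ->
  sopoly_eval P l n <= clock l n (sopoly_weight P).
Proof.
move=> mono_l; elim: P => [cs|P1 IH1 P2 IH2|P1 IH1 P2 IH2|P1 IH1] /=.
- exact: poly_le_clock.
- set k := maxn _ _.
  have le1 := leq_trans IH1 (clock_mono l n (leq_maxl _ _ : _ <= k)).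
  have le2 := leq_trans IH2 (clock_mono l n (leq_maxr _ _ : _ <= k)).
  have [_ _ sq] := clock_step_ge l (clock l n k); have two := clock_ge_size l n k.
  nia.
- set k := maxn _ _.
  have le1 := leq_trans IH1 (clock_mono l n (leq_maxl _ _ : _ <= k)).
  have le2 := leq_trans IH2 (clock_mono l n (leq_maxr _ _ : _ <= k)).
  have [_ _ sq] := clock_step_ge l (clock l n k).
  by apply: leq_trans sq; apply: leq_mul.
- have [_ le _] := clock_step_ge l (clock l n (sopoly_weight P1)).
  by apply: leq_trans le; apply: mono_l.
Qed.

Definition SPconst c := SPpoly [:: c].

Definition clock_sopoly (k : nat) : sopoly :=
  let step Q := let S := SPadd (SPadd Q (SPapp Q)) (SPconst 2) in SPmul S S in
  iter k step (SPpoly [:: 2; 1]).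

Lemma eval_SPconst c l n : sopoly_eval (SPconst c) l n = c.
Proof. by rewrite /= big_ord1 muln1. Qed.

Lemma eval_clock_sopoly k l n : sopoly_eval (clock_sopoly k) l n = clock l n k.
Proof.
elim: k => [|k IH].
  by rewrite /clock_sopoly /clock /= !big_ord_recl big_ord0 /= /bump /=; lia.
by rewrite /clock_sopoly iterS -/(clock_sopoly k) /= IH big_ord1 expn0 muln1.
Qed.

(** * Size functions *)

Lemma mem_strings_upto n s : (s \in strings_upto n) = (size s <= n).
Proof.
have mem_cons x y s' (L : seq str) : (y :: s' \in map (cons x) L) = (y == x) && (s' \in L).
  by apply/mapP/andP => [[s'' Hs'' [-> ->]]|[/eqP -> H]]; [rewrite eqxx | exists s'].
elim: n s => [|n IH] [|b s] //=.
by rewrite in_cons mem_cat cats0 !mem_cons IH ltnS; case: b; rewrite /= ?orbF.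
Qed.

Lemma size_fun_ge (phi : str -> str) n s : size s <= n -> size (phi s) <= size_fun phi n.
Proof. by move=> H; apply: (@leq_bigmax_seq _ _ xpredT); rewrite ?mem_strings_upto. Qed.

Lemma size_fun_le (phi : str -> str) n B :
  (forall s, size s <= n -> size (phi s) <= B) -> size_fun phi n <= B.
Proof. by move=> H; apply/bigmax_leqP_seq => s; rewrite mem_strings_upto => Hs _; apply: H. Qed.

Lemma size_fun_mono (phi : str -> str) : {homo size_fun phi : n n' / n <= n'}.
Proof. by move=> n n' H; apply: size_fun_le => s Hs; apply: size_fun_ge; apply: leq_trans Hs H. Qed.

Lemma size_fun_monotone (phi : str -> str) n : length_monotone phi ->
  size_fun phi n = size (phi (nseq n false)).
Proof.
move=> Hm; apply/eqP; rewrite eqn_leq size_fun_ge ?size_nseq // andbT.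
by apply: size_fun_le => s Hs; apply: Hm; rewrite size_nseq.
Qed.

(** * Runs, tapes and unary counters *)

Lemma iter_step_halted (M : OTM) phi (c : config M) t :
  c.1 = otm_halt M -> iter t (step phi) c = c.
Proof. by move=> halted; elim: t => //= t ->; rewrite /step halted eqxx. Qed.

Lemma iter_step_halted_le (M : OTM) phi (c : config M) t T : t <= T ->
  (iter t (step phi) c).1 = otm_halt M -> iter T (step phi) c = iter t (step phi) c.
Proof. by move=> /subnK <- halted; rewrite iterD iter_step_halted. Qed.

Lemma iter_step_halted_eq (M : OTM) phi (c : config M) t t' :
  (iter t (step phi) c).1 = otm_halt M -> (iter t' (step phi) c).1 = otm_halt M ->
  iter t (step phi) c = iter t' (step phi) c.
Proof.
move=> halted halted'.
by case: (leqP t t') => [/iter_step_halted_le -> | /ltnW /iter_step_halted_le ->].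
Qed.

Lemma nth_init_tapes (M : OTM) a i : 0 < i -> nth tape0 (init M a).2 i = tape0.
Proof.
by case: i => // i _; rewrite -[nth _ _ _]/(nth tape0 (nseq _ tape0) i) nth_nseq if_same.
Qed.

Definition tape_repr (t : tape) (f : nat -> sym) (h : nat) :=
  t.2 = h /\ forall i, nth None t.1 i = f i.

Definition set_cell (f : nat -> sym) (h : nat) (s : sym) : nat -> sym :=
  fun i => if i == h then s else f i.

Definition move_head (d : move) (h : nat) : nat :=
  match d with MoveL => h.-1 | MoveS => h | MoveR => h.+1 end.

Lemma tape_repr_do t f h a :
  tape_repr t f h -> tape_repr (do_action a t) (set_cell f h a.1) (move_head a.2 h).
Proof.
case=> Hh Hf; case: a => s d; rewrite /do_action /=.
have E i : nth None (set_nth None t.1 t.2 s) i = set_cell f h s i.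
  by rewrite nth_set_nth /= /set_cell Hh Hf.
by case: d; split => //=; rewrite Hh.
Qed.

Lemma tape_repr_read t f h : tape_repr t f h -> read t = f h.
Proof. by case=> Hh Hf; rewrite /read Hf Hh. Qed.

Lemma set_cell_id f h : set_cell f h (f h) = f.
Proof. by apply: functional_extensionality => i; rewrite /set_cell; case: eqP => // ->. Qed.

Lemma tape_repr0 : tape_repr tape0 (fun _ => None) 0.
Proof. by split => // -[|i]. Qed.

Lemma tape_repr_idle t f h : tape_repr t f h -> tape_repr (do_action (read t, MoveS) t) f h.
Proof.
by move=> H; have := tape_repr_do (read t, MoveS) H; rewrite (tape_repr_read H) set_cell_id.
Qed.

Definition zeros_until (y i : nat) : sym := if i < y then Some false else None.

Definition blank_until (y : nat) (f : nat -> sym) (i : nat) : sym := if i < y then None else f i.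

Lemma contents_zeros s x : (forall i, nth None s i = zeros_until x i) -> contents s = nseq x false.
Proof.
elim: x s => [|x IH] [|y s] E //=; first by move: (E 0) => /= ->.
  by move: (E 0).
by move: (E 0) => /= ->; rewrite (IH s) // => i; apply: (E i.+1).
Qed.

Lemma nth_map_read ts i : nth None (map read ts) i = read (nth tape0 ts i).
Proof.
by case: (ltnP i (size ts)) => H; [rewrite (nth_map tape0) | rewrite !nth_default ?size_map].
Qed.

Definition tape_eq (t u : tape) := t.2 = u.2 /\ forall i, nth None t.1 i = nth None u.1 i.

Lemma tape_eq_trans t u w : tape_eq t u -> tape_eq u w -> tape_eq t w.
Proof. by case=> H1 H2 [H3 H4]; split; [rewrite H1 | move=> i; rewrite H2]. Qed.

Lemma tape_eq_read t u : tape_eq t u -> read t = read u.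
Proof. by case=> H1 H2; rewrite /read H1 H2. Qed.

Lemma tape_eq_do a t u : tape_eq t u -> tape_eq (do_action a t) (do_action a u).
Proof.
case=> H1 H2; case: a => s d; rewrite /do_action /=.
have E i : nth None (set_nth None t.1 t.2 s) i = nth None (set_nth None u.1 u.2 s) i.
  by rewrite !nth_set_nth /= H1 H2.
by case: d; split => //=; rewrite H1.
Qed.

Lemma tape_eq_idle t : tape_eq (do_action (read t, MoveS) t) t.
Proof. by split => //= i; rewrite nth_set_nth /=; case: eqP => // ->. Qed.

Lemma tape_eq_contents t u : tape_eq t u -> contents t.1 = contents u.1.
Proof.
case=> _; elim: t.1 u.1 => [|x s IH] [|y s'] E //=.
- by move: (E 0) => /= <-.
- by move: (E 0) => /= ->.
- move: (E 0) => /= <-; case: x {E} (E) => // b E.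
  by rewrite (IH s') // => i; apply: (E i.+1).
Qed.

(* A counter with value [v] is a tape marked [Some true] at cell 0, blank elsewhere, with the
   head at cell [v]: it is incremented and decremented by head moves and tested for zero by
   reading the mark. *)
Definition mark0 (i : nat) : sym := if i == 0 then Some true else None.

Definition counter (t : tape) (v : nat) := tape_repr t mark0 v.

Lemma counter_read t v : counter t v -> (read t == Some true) = (v == 0).
Proof. by move=> H; rewrite (tape_repr_read H) /mark0; case: (v). Qed.

Inductive cnt_op := CInc | CDec | CKeep | CInit.

Definition cnt_action (o : cnt_op) (r : sym) : action :=
  match o with
  | CInc => (r, MoveR) | CDec => (r, MoveL) | CKeep => (r, MoveS) | CInit => (Some true, MoveS)
  end.

Definition cnt_eval (o : cnt_op) (v : nat) : nat :=
  match o with CInc => v.+1 | CDec => v.-1 | CKeep => v | CInit => 0 end.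

Lemma counter_do t v o : counter t v -> o <> CInit ->
  counter (do_action (cnt_action o (read t)) t) (cnt_eval o v).
Proof.
move=> H Ho; have := tape_repr_do (cnt_action o (read t)) H.
by rewrite (tape_repr_read H); case: o Ho => //= _; rewrite set_cell_id.
Qed.

(** * The clocked machine *)

Inductive ctl := Init | CopyIn | PadIn1 | PadIn2 | Rewind | Round | WriteQ | RestoreX
  | Query | Answer | EraseAns | RewindQ | PadQ1 | PadQ2 | SqSplit | SqOuter | SqAdd
  | SqRestore | SqClear | NextRound.

Definition ctl_index (c : ctl) : nat :=
  match c with
  | Init => 0 | CopyIn => 1 | PadIn1 => 2 | PadIn2 => 3 | Rewind => 4 | Round => 5
  | WriteQ => 6 | RestoreX => 7 | Query => 8 | Answer => 9 | EraseAns => 10 | RewindQ => 11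
  | PadQ1 => 12 | PadQ2 => 13 | SqSplit => 14 | SqOuter => 15 | SqAdd => 16
  | SqRestore => 17 | SqClear => 18 | NextRound => 19
  end.

Definition ctl_of_index (n : nat) : ctl :=
  match n with
  | 0 => Init | 1 => CopyIn | 2 => PadIn1 | 3 => PadIn2 | 4 => Rewind | 5 => Round
  | 6 => WriteQ | 7 => RestoreX | 8 => Query | 9 => Answer | 10 => EraseAns | 11 => RewindQ
  | 12 => PadQ1 | 13 => PadQ2 | 14 => SqSplit | 15 => SqOuter | 16 => SqAdd
  | 17 => SqRestore | 18 => SqClear | _ => NextRound
  end.

Lemma ctl_index_lt c : ctl_index c < 20. Proof. by case: c. Qed.

Lemma ctl_indexK : cancel (fun c => Ordinal (ctl_index_lt c)) (fun o : 'I_20 => ctl_of_index o).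
Proof. by case. Qed.

HB.instance Definition _ := Equality.copy ctl (can_type ctl_indexK).
HB.instance Definition _ := Finite.copy ctl (can_type ctl_indexK).

Section ClockedMachine.
Variables (M : OTM) (K : nat).
Notation m := (ntapes M).

(* The tapes of [M] are followed by five counters: X holds the clock value, J the number of
   rounds still to run, and Y, Z, C are scratch counters. *)
Definition Xi := m.
Definition Yi := m.+1.
Definition Zi := m.+2.
Definition Ci := m.+3.
Definition Ji := m.+4.

Definition ctlQ := ('I_K.+1 + ctl)%type.
Definition clockedQ := (otm_Q M + ctlQ)%type.
Definition ctlq (c : ctl) : clockedQ := inr (inr c).

Record ctl_out := CO { cq : clockedQ; ca0 : sym -> action; ca1 : sym -> action;
  cox : cnt_op; coy : cnt_op; coz : cnt_op; coc : cnt_op; coj : cnt_op }.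

Definition keep (d : move) (r : sym) : action := (r, d).
Definition idle := keep MoveS.
Definition goto (q : clockedQ) := CO q idle idle CKeep CKeep CKeep CKeep CKeep.

(* The states [inl j] load K into J.  A round, run from [Round] while J > 0 with x on X, writes
   0^x on the query tape, queries, measures the answer into Y while erasing it, and replaces x by
   (x + |answer| + 2)^2 = [clock_step] (by repeated addition through Y, Z, C).  When J = 0 the
   machine jumps to the start state of [M]. *)
Definition ctl_step (s : ctlQ) (r0 r1 : sym) (zx zy zz zc zj : bool) : ctl_out :=
  match s with
  | inl j => if val j is j'.+1 then CO (inr (inl (inord j'))) idle idle CKeep CKeep CKeep CKeep CInc
             else goto (ctlq CopyIn)
  | inr c => match c with
    | Init => CO (inr (inl ord_max)) idle idle CInit CInit CInit CInit CInit
    | CopyIn => if r0 is Some _ then CO (ctlq CopyIn) (keep MoveR) idle CInc CInc CKeep CKeep CKeep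
                else goto (ctlq PadIn1)
    | PadIn1 => CO (ctlq PadIn2) idle idle CInc CKeep CKeep CKeep CKeep
    | PadIn2 => CO (ctlq Rewind) idle idle CInc CKeep CKeep CKeep CKeep
    | Rewind => if zy then goto (ctlq Round)
                else CO (ctlq Rewind) (keep MoveL) idle CKeep CDec CKeep CKeep CKeep
    | Round => if zj then goto (inl (otm_start M)) else goto (ctlq WriteQ)
    | WriteQ => if zx then goto (ctlq RestoreX)
                else CO (ctlq WriteQ) idle (fun _ => (Some false, MoveR))
                       CDec CInc CKeep CKeep CKeep
    | RestoreX => if zy then goto (ctlq Query)
                  else CO (ctlq RestoreX) idle idle CInc CDec CKeep CKeep CKeep
    | Query => goto (ctlq Answer)
    | Answer => if zj then goto (inl (otm_answer M)) else goto (ctlq EraseAns)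
    | EraseAns => if r1 is Some _
                  then CO (ctlq EraseAns) idle (fun _ => (None, MoveR)) CKeep CInc CKeep CKeep CKeep
                  else goto (ctlq RewindQ)
    | RewindQ => if zy then goto (ctlq PadQ1)
                 else CO (ctlq RewindQ) idle (keep MoveL) CInc CDec CKeep CKeep CKeep
    | PadQ1 => CO (ctlq PadQ2) idle idle CInc CKeep CKeep CKeep CKeep
    | PadQ2 => CO (ctlq SqSplit) idle idle CInc CKeep CKeep CKeep CKeep
    | SqSplit => if zx then goto (ctlq SqOuter)
                 else CO (ctlq SqSplit) idle idle CDec CInc CInc CKeep CKeep
    | SqOuter => if zz then goto (ctlq SqClear)
                 else CO (ctlq SqAdd) idle idle CKeep CKeep CDec CKeep CKeep
    | SqAdd => if zy then goto (ctlq SqRestore)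
               else CO (ctlq SqAdd) idle idle CInc CDec CKeep CInc CKeep
    | SqRestore => if zc then goto (ctlq SqOuter)
                   else CO (ctlq SqRestore) idle idle CKeep CInc CKeep CDec CKeep
    | SqClear => if zy then goto (ctlq NextRound)
                 else CO (ctlq SqClear) idle idle CKeep CDec CKeep CKeep CKeep
    | NextRound => CO (ctlq Round) idle idle CKeep CKeep CKeep CKeep CDec
    end
  end.

Definition ctl_actions (R : ctl_out) (rs : seq sym) (i : nat) : action :=
  if i == 0 then ca0 R (nth None rs 0)
  else if i == 1 then ca1 R (nth None rs 1)
  else if i == Xi then cnt_action (cox R) (nth None rs i)
  else if i == Yi then cnt_action (coy R) (nth None rs i)
  else if i == Zi then cnt_action (coz R) (nth None rs i)
  else if i == Ci then cnt_action (coc R) (nth None rs i)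
  else if i == Ji then cnt_action (coj R) (nth None rs i)
  else (nth None rs i, MoveS).

Definition sim_actions (acts : seq action) (rs : seq sym) (i : nat) : action :=
  if i < m then nth (None, MoveS) acts i
  else if i == Xi then (nth None rs i, MoveL) else (nth None rs i, MoveS).

Definition at_zero (r : sym) : bool := r == Some true.

(* A state [inl q] simulates one step of [M] in state [q] and decrements the clock X; it halts
   as soon as X is zero.  Queries of [M] go through the machine's own [Query] state, and
   [Answer] returns to the simulation because J = 0 by then. *)
Definition clocked_delta (q : clockedQ) (rs : seq sym) : clockedQ * seq action :=
  match q with
  | inl qM =>
    if at_zero (nth None rs Xi) then
      (inl (otm_halt M), mkseq (ctl_actions (goto (ctlq Query)) rs) (m + 5))
    else if qM == otm_query M then
      let R := CO (ctlq Query) idle idle CDec CKeep CKeep CKeep CKeep in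
      (ctlq Query, mkseq (ctl_actions R rs) (m + 5))
    else let (q', acts) := otm_delta qM (take m rs) in
      (inl q', mkseq (sim_actions acts rs) (m + 5))
  | inr s =>
    let R := ctl_step s (nth None rs 0) (nth None rs 1) (at_zero (nth None rs Xi))
               (at_zero (nth None rs Yi)) (at_zero (nth None rs Zi)) (at_zero (nth None rs Ci))
               (at_zero (nth None rs Ji)) in
    (cq R, mkseq (ctl_actions R rs) (m + 5))
  end.

Definition clocked : OTM := {| otm_Q := clockedQ; otm_k := otm_k M + 5; otm_start := ctlq Init;
  otm_halt := inl (otm_halt M); otm_query := ctlq Query; otm_answer := ctlq Answer;
  otm_delta := clocked_delta |}.

Lemma nth_mkseq_do (f : nat -> action) (ts : seq tape) n i : i < n ->
  nth tape0 (mkseq (fun j => do_action (nth (None, MoveS) (mkseq f n) j) (nth tape0 ts j)) n) i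
  = do_action (f i) (nth tape0 ts i).
Proof. by move=> H; rewrite nth_mkseq // nth_mkseq. Qed.

Lemma step_clocked phi (q : clockedQ) ts :
  q != inl (otm_halt M) -> q != ctlq Query ->
  step (M := clocked) phi (q, ts) =
  ((clocked_delta q (map read ts)).1,
   mkseq (fun i => do_action (nth (None, MoveS) (clocked_delta q (map read ts)).2 i)
                             (nth tape0 ts i)) (size ts)).
Proof. by move=> H1 H2; rewrite /step /= (negbTE H1) (negbTE H2); case: clocked_delta. Qed.

Definition ctl_tapes (R : ctl_out) (ts : seq tape) : seq tape :=
  mkseq (fun i => do_action (nth (None, MoveS) (mkseq (ctl_actions R (map read ts)) (m + 5)) i)
                            (nth tape0 ts i)) (m + 5).

Lemma nth_ctl_tapes R ts i : i < m + 5 ->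
  nth tape0 (ctl_tapes R ts) i = do_action (ctl_actions R (map read ts) i) (nth tape0 ts i).
Proof. exact: nth_mkseq_do. Qed.

Definition ctl_next (s : ctlQ) (ts : seq tape) : ctl_out :=
  let z i := at_zero (read (nth tape0 ts i)) in
  ctl_step s (read (nth tape0 ts 0)) (read (nth tape0 ts 1)) (z Xi) (z Yi) (z Zi) (z Ci) (z Ji).

Lemma step_ctl phi s ts : s != inr Query -> size ts = m + 5 ->
  step (M := clocked) phi (inr s, ts) = (cq (ctl_next s ts), ctl_tapes (ctl_next s ts) ts).
Proof. by move=> notQ Hs; rewrite step_clocked // Hs /clocked_delta !nth_map_read. Qed.

Lemma ctl_actions0 R rs : ctl_actions R rs 0 = ca0 R (nth None rs 0). Proof. by []. Qed.
Lemma ctl_actions1 R rs : ctl_actions R rs 1 = ca1 R (nth None rs 1). Proof. by []. Qed.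

Ltac ctl_actions_tac :=
  rewrite /ctl_actions /Xi /Yi /Zi /Ci /Ji /ntapes; do ![case: eqP => //; try lia].

Lemma ctl_actionsX R rs : ctl_actions R rs Xi = cnt_action (cox R) (nth None rs Xi).
Proof. ctl_actions_tac. Qed.
Lemma ctl_actionsY R rs : ctl_actions R rs Yi = cnt_action (coy R) (nth None rs Yi).
Proof. ctl_actions_tac. Qed.
Lemma ctl_actionsZ R rs : ctl_actions R rs Zi = cnt_action (coz R) (nth None rs Zi).
Proof. ctl_actions_tac. Qed.
Lemma ctl_actionsC R rs : ctl_actions R rs Ci = cnt_action (coc R) (nth None rs Ci).
Proof. ctl_actions_tac. Qed.
Lemma ctl_actionsJ R rs : ctl_actions R rs Ji = cnt_action (coj R) (nth None rs Ji).
Proof. ctl_actions_tac. Qed.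
Lemma ctl_actions_work R rs i : 1 < i < m -> ctl_actions R rs i = (nth None rs i, MoveS).
Proof. by case/andP => H1 H2; rewrite /ntapes in H2; ctl_actions_tac. Qed.

Lemma ctl_actions_idle R rs i : ca0 R = idle -> ca1 R = idle -> i < m ->
  ctl_actions R rs i = (nth None rs i, MoveS).
Proof.
move=> H0 H1; case: i => [|[|i]] Hi; first by rewrite ctl_actions0 H0.
  by rewrite ctl_actions1 H1.
by rewrite ctl_actions_work.
Qed.

Lemma counters_lt : [/\ Xi < m + 5, Yi < m + 5, Zi < m + 5, Ci < m + 5 & Ji < m + 5].
Proof. by rewrite /Xi /Yi /Zi /Ci /Ji; split; lia. Qed.

Record acfg := AC { aq : clockedQ; fin : nat -> sym; hin : nat; fq : nat -> sym; hq : nat;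
  ax : nat; ay : nat; az : nat; ac : nat; aj : nat }.

Definition realizes (c : config clocked) (A : acfg) :=
  [/\ c.1 = aq A, size c.2 = m + 5, tape_repr (nth tape0 c.2 0) (fin A) (hin A),
      tape_repr (nth tape0 c.2 1) (fq A) (hq A) &
      forall i, 1 < i < m -> tape_repr (nth tape0 c.2 i) (fun _ => None) 0] /\
  [/\ counter (nth tape0 c.2 Xi) (ax A), counter (nth tape0 c.2 Yi) (ay A),
      counter (nth tape0 c.2 Zi) (az A), counter (nth tape0 c.2 Ci) (ac A) &
      counter (nth tape0 c.2 Ji) (aj A)].

Definition acfg_next (R : ctl_out) (A : acfg) : acfg :=
  let a0 := ca0 R (fin A (hin A)) in let a1 := ca1 R (fq A (hq A)) in
  AC (cq R) (set_cell (fin A) (hin A) a0.1) (move_head a0.2 (hin A))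
     (set_cell (fq A) (hq A) a1.1) (move_head a1.2 (hq A))
     (cnt_eval (cox R) (ax A)) (cnt_eval (coy R) (ay A)) (cnt_eval (coz R) (az A))
     (cnt_eval (coc R) (ac A)) (cnt_eval (coj R) (aj A)).

Definition acfg_step (s : ctlQ) (A : acfg) : acfg :=
  acfg_next (ctl_step s (fin A (hin A)) (fq A (hq A)) (ax A == 0) (ay A == 0) (az A == 0)
                      (ac A == 0) (aj A == 0)) A.

Lemma ctl_step_noinit s r0 r1 zx zy zz zc zj : s != inr Init ->
  let R := ctl_step s r0 r1 zx zy zz zc zj in
  [/\ cox R <> CInit, coy R <> CInit, coz R <> CInit, coc R <> CInit & coj R <> CInit].
Proof.
case: s => [j|c] /=; first by case: (val j).
by case: c => //= _; repeat case: ifP => //; try case: r0 => //; try case: r1.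
Qed.

Lemma realizes_step phi c A s :
  realizes c A -> aq A = inr s -> s != inr Query -> s != inr Init ->
  realizes (step (M := clocked) phi c) (acfg_step s A).
Proof.
case: c => q ts [[/= -> Hs H0 H1 Hw] [HX HY HZ HC HJ]] HA notQ notI; rewrite /acfg_step.
have -> : ctl_step s (fin A (hin A)) (fq A (hq A)) (ax A == 0) (ay A == 0) (az A == 0)
    (ac A == 0) (aj A == 0) = ctl_next s ts.
  by rewrite /ctl_next /at_zero (tape_repr_read H0) (tape_repr_read H1) (counter_read HX)
    (counter_read HY) (counter_read HZ) (counter_read HC) (counter_read HJ).
rewrite HA step_ctl //; set R := ctl_next s ts.
have [NX NY NZ NC NJ] : [/\ cox R <> CInit, coy R <> CInit, coz R <> CInit, coc R <> CInit
  & coj R <> CInit] by apply: ctl_step_noinit.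
have [LX LY LZ LC LJ] := counters_lt.
split; split.
- by [].
- by rewrite size_mkseq.
- rewrite nth_ctl_tapes ?addn5 // ctl_actions0 nth_map_read (tape_repr_read H0).
  exact: tape_repr_do.
- rewrite nth_ctl_tapes ?addn5 // ctl_actions1 nth_map_read (tape_repr_read H1).
  exact: tape_repr_do.
- move=> i Hi; rewrite nth_ctl_tapes; last by case/andP: Hi => _; lia.
  by rewrite ctl_actions_work // nth_map_read; apply/tape_repr_idle/Hw.
- by rewrite nth_ctl_tapes // ctl_actionsX nth_map_read; apply: counter_do.
- by rewrite nth_ctl_tapes // ctl_actionsY nth_map_read; apply: counter_do.
- by rewrite nth_ctl_tapes // ctl_actionsZ nth_map_read; apply: counter_do.
- by rewrite nth_ctl_tapes // ctl_actionsC nth_map_read; apply: counter_do.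
- by rewrite nth_ctl_tapes // ctl_actionsJ nth_map_read; apply: counter_do.
Qed.

Lemma realizes_next phi c A s B :
  realizes c A -> aq A = inr s -> s != inr Query -> s != inr Init -> acfg_step s A = B ->
  realizes (step (M := clocked) phi c) B.
Proof. by move=> H1 H2 H3 H4 <-; apply: realizes_step. Qed.

Ltac run_ctl H := apply: (realizes_next _ H); [by [] | by [] | by [] |
  rewrite /acfg_step /acfg_next /= ?set_cell_id ].

Ltac norm_acfg H := rewrite -?iterS -?iterD in H; cbn [fin hin fq hq ax ay az ac aj aq] in H;
  rewrite ?add0n ?subnn in H.

Section Phases.
Variable phi : str -> str.
Notation stp := (step (M := clocked) phi).

Lemma loadj_loop fi f : forall r (j : 'I_K.+1) jj c, val j = r ->
  realizes c (AC (inr (inl j)) fi 0 f 0 0 0 0 0 jj) ->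
  realizes (iter r.+1 stp c) (AC (ctlq CopyIn) fi 0 f 0 0 0 0 0 (jj + r)).
Proof.
elim => [|r IH] j jj c Hj H.
  rewrite addn0 /=; apply: (realizes_next _ H) => //=.
  by rewrite /acfg_step /= Hj /acfg_next /= !set_cell_id.
have Hr : r < K.+1 by have := ltn_ord j; rewrite Hj; lia.
rewrite iterSr addnS -addSn; apply: (IH (inord r)); first exact: inordK.
by apply: (realizes_next _ H) => //=; rewrite /acfg_step /= Hj /acfg_next /= !set_cell_id.
Qed.

Lemma copyin_loop d (fi : nat -> sym) fq0 hq0 z cc j : forall h x y c,
  (forall i, i < d -> fi (h + i) <> None) ->
  realizes c (AC (ctlq CopyIn) fi h fq0 hq0 x y z cc j) ->
  realizes (iter d stp c) (AC (ctlq CopyIn) fi (h + d) fq0 hq0 (x + d) (y + d) z cc j).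
Proof.
elim: d => [|d IH] h x y c Hf H; first by rewrite !addn0.
have H' : realizes (stp c) (AC (ctlq CopyIn) fi h.+1 fq0 hq0 x.+1 y.+1 z cc j).
  run_ctl H; have := Hf 0 isT; rewrite addn0.
  by case E: (fi h) => [b|] // _ /=; rewrite -E !set_cell_id.
rewrite iterSr; have := IH h.+1 x.+1 y.+1 _ _ H'; rewrite !addSnnS; apply.
by move=> i Hi; rewrite addSnnS; apply: Hf.
Qed.

Lemma copyin_exit fi h fq0 hq0 x y z cc j c : fi h = None ->
  realizes c (AC (ctlq CopyIn) fi h fq0 hq0 x y z cc j) ->
  realizes (stp c) (AC (ctlq PadIn1) fi h fq0 hq0 x y z cc j).
Proof. by move=> E H; run_ctl H; rewrite E /= -E !set_cell_id. Qed.

Lemma padin1_go fi h f hq0 x y z cc j c :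
  realizes c (AC (ctlq PadIn1) fi h f hq0 x y z cc j) ->
  realizes (stp c) (AC (ctlq PadIn2) fi h f hq0 x.+1 y z cc j).
Proof. by move=> H; run_ctl H. Qed.

Lemma padin2_go fi h f hq0 x y z cc j c :
  realizes c (AC (ctlq PadIn2) fi h f hq0 x y z cc j) ->
  realizes (stp c) (AC (ctlq Rewind) fi h f hq0 x.+1 y z cc j).
Proof. by move=> H; run_ctl H. Qed.

Lemma rewind_loop fi fq0 hq0 x z cc j : forall d h c,
  realizes c (AC (ctlq Rewind) fi h fq0 hq0 x d z cc j) ->
  realizes (iter d.+1 stp c) (AC (ctlq Round) fi (h - d) fq0 hq0 x 0 z cc j).
Proof.
elim => [|d IH] h c H; first by rewrite subn0 /=; run_ctl H.
rewrite iterSr; have ->: h - d.+1 = h.-1 - d by lia.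
by apply: IH; run_ctl H.
Qed.

Lemma round_go fi hi x j c :
  realizes c (AC (ctlq Round) fi hi (fun _ => None) 0 x 0 0 0 j.+1) ->
  realizes (stp c) (AC (ctlq WriteQ) fi hi (zeros_until 0) 0 x 0 0 0 j.+1).
Proof. by move=> H; run_ctl H. Qed.

Lemma writeq_loop fi hi z cc j : forall d x y c,
  realizes c (AC (ctlq WriteQ) fi hi (zeros_until y) y d x z cc j) ->
  realizes (iter d.+1 stp c)
    (AC (ctlq RestoreX) fi hi (zeros_until (y + d)) (y + d) 0 (x + d) z cc j).
Proof.
elim => [|d IH] x y c H; first by rewrite !addn0 /=; run_ctl H.
rewrite iterSr !addnS -!addSn; apply: IH; run_ctl H.
congr AC; apply: functional_extensionality => i.
by rewrite /set_cell /zeros_until ltnS; case: ltngtP.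
Qed.

Lemma restorex_loop fi hi fq0 hq0 z cc j : forall d x c,
  realizes c (AC (ctlq RestoreX) fi hi fq0 hq0 x d z cc j) ->
  realizes (iter d.+1 stp c) (AC (ctlq Query) fi hi fq0 hq0 (x + d) 0 z cc j).
Proof.
elim => [|d IH] x c H; first by rewrite !addn0 /=; run_ctl H.
by rewrite iterSr addnS -addSn; apply: IH; run_ctl H.
Qed.

Lemma realizes_query fi hi x hq0 X Y Z C J c :
  realizes c (AC (ctlq Query) fi hi (zeros_until x) hq0 X Y Z C J) ->
  realizes (stp c) (AC (ctlq Answer) fi hi (nth None (map Some (phi (nseq x false)))) 0 X Y Z C J).
Proof.
case: c => q ts [[/= -> Hs H0 [_ H1] Hw] [HX HY HZ HC HJ]]; rewrite /step /= (contents_zeros H1).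
set ts' := set_nth _ _ _ _.
have N i : i != 1 -> nth tape0 ts' i = nth tape0 ts i.
  by move=> Hi; rewrite nth_set_nth /= (negbTE Hi).
have [NX NY NZ NC NJ] : [/\ Xi != 1, Yi != 1, Zi != 1, Ci != 1 & Ji != 1] by [].
split; split => /=; rewrite ?(N 0) ?(N _ NX) ?(N _ NY) ?(N _ NZ) ?(N _ NC) ?(N _ NJ) //.
- by rewrite size_set_nth Hs; apply/maxn_idPr; lia.
- by rewrite nth_set_nth.
- by move=> i Hi; rewrite N; [apply: Hw | apply/eqP => E; rewrite E in Hi].
Qed.

Lemma answer_go fi hi f x j c :
  realizes c (AC (ctlq Answer) fi hi f 0 x 0 0 0 j.+1) ->
  realizes (stp c) (AC (ctlq EraseAns) fi hi (blank_until 0 f) 0 x 0 0 0 j.+1).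
Proof. by move=> H; run_ctl H. Qed.

Lemma eraseans_loop fi hi (w : seq sym) x z cc j : forall d h y c,
  h + d = size w -> (forall i, i < size w -> nth None w i <> None) ->
  realizes c (AC (ctlq EraseAns) fi hi (blank_until h (nth None w)) h x y z cc j) ->
  realizes (iter d stp c)
    (AC (ctlq EraseAns) fi hi (blank_until (h + d) (nth None w)) (h + d) x (y + d) z cc j).
Proof.
elim => [|d IH] h y c Hd Hw H; first by rewrite !addn0.
rewrite iterSr !addnS -!addSn; apply: IH => //; first by rewrite addSn -addnS.
run_ctl H; have: nth None w h <> None by apply: Hw; lia.
rewrite /blank_until ltnn; case E: (nth None w h) => [b|] // _ /=.
rewrite set_cell_id; congr AC; apply: functional_extensionality => i.
by rewrite /set_cell ltnS; case: ltngtP.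
Qed.

Lemma eraseans_exit fi hi (w : seq sym) x y z cc j c :
  realizes c (AC (ctlq EraseAns) fi hi (blank_until (size w) (nth None w)) (size w) x y z cc j) ->
  realizes (stp c) (AC (ctlq RewindQ) fi hi (fun _ => None) (size w) x y z cc j).
Proof.
move=> H; run_ctl H; rewrite /blank_until ltnn nth_default //= set_cell_id.
congr AC; apply: functional_extensionality => i; rewrite /set_cell.
by case: eqP => // _; case: ltnP => // Hi; rewrite nth_default.
Qed.

Lemma rewindq_loop fi hi z cc j : forall d h x c,
  realizes c (AC (ctlq RewindQ) fi hi (fun _ => None) h x d z cc j) ->
  realizes (iter d.+1 stp c) (AC (ctlq PadQ1) fi hi (fun _ => None) (h - d) (x + d) 0 z cc j).
Proof.
elim => [|d IH] h x c H; first by rewrite subn0 addn0 /=; run_ctl H.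
rewrite iterSr; have ->: h - d.+1 = h.-1 - d by lia.
by rewrite addnS -addSn; apply: IH; run_ctl H.
Qed.

Lemma padq1_go fi hi f h x y z cc j c :
  realizes c (AC (ctlq PadQ1) fi hi f h x y z cc j) ->
  realizes (stp c) (AC (ctlq PadQ2) fi hi f h x.+1 y z cc j).
Proof. by move=> H; run_ctl H. Qed.

Lemma padq2_go fi hi f h x y z cc j c :
  realizes c (AC (ctlq PadQ2) fi hi f h x y z cc j) ->
  realizes (stp c) (AC (ctlq SqSplit) fi hi f h x.+1 y z cc j).
Proof. by move=> H; run_ctl H. Qed.

Lemma sqsplit_loop fi hi fq0 hq0 cc j : forall d y z c,
  realizes c (AC (ctlq SqSplit) fi hi fq0 hq0 d y z cc j) ->
  realizes (iter d.+1 stp c) (AC (ctlq SqOuter) fi hi fq0 hq0 0 (y + d) (z + d) cc j).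
Proof.
elim => [|d IH] y z c H; first by rewrite !addn0 /=; run_ctl H.
by rewrite iterSr !addnS -!addSn; apply: IH; run_ctl H.
Qed.

Lemma sqadd_loop fi hi fq0 hq0 z j : forall d x cc c,
  realizes c (AC (ctlq SqAdd) fi hi fq0 hq0 x d z cc j) ->
  realizes (iter d.+1 stp c) (AC (ctlq SqRestore) fi hi fq0 hq0 (x + d) 0 z (cc + d) j).
Proof.
elim => [|d IH] x cc c H; first by rewrite !addn0 /=; run_ctl H.
by rewrite iterSr !addnS -!addSn; apply: IH; run_ctl H.
Qed.

Lemma sqrestore_loop fi hi fq0 hq0 x z j : forall d y c,
  realizes c (AC (ctlq SqRestore) fi hi fq0 hq0 x y z d j) ->
  realizes (iter d.+1 stp c) (AC (ctlq SqOuter) fi hi fq0 hq0 x (y + d) z 0 j).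
Proof.
elim => [|d IH] y c H; first by rewrite !addn0 /=; run_ctl H.
by rewrite iterSr !addnS -!addSn; apply: IH; run_ctl H.
Qed.

Lemma sqouter_loop fi hi fq0 hq0 s j : forall d x c,
  realizes c (AC (ctlq SqOuter) fi hi fq0 hq0 x s d 0 j) ->
  realizes (iter (d * (2 * s + 3)) stp c) (AC (ctlq SqOuter) fi hi fq0 hq0 (x + d * s) s 0 0 j).
Proof.
elim => [|d IH] x c H; first by rewrite !mul0n addn0.
have -> : d.+1 * (2 * s + 3) = d * (2 * s + 3) + (s.+1 + s.+1 + 1) by lia.
rewrite !iterD.
have H1 : realizes (stp c) (AC (ctlq SqAdd) fi hi fq0 hq0 x s d 0 j) by run_ctl H.
have H2 := sqrestore_loop (sqadd_loop H1); rewrite !add0n in H2.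
have -> : x + d.+1 * s = (x + s) + d * s by lia.
exact: IH.
Qed.

Lemma sqouter_exit fi hi f h x y cc j c :
  realizes c (AC (ctlq SqOuter) fi hi f h x y 0 cc j) ->
  realizes (stp c) (AC (ctlq SqClear) fi hi f h x y 0 cc j).
Proof. by move=> H; run_ctl H. Qed.

Lemma sqclear_loop fi hi fq0 hq0 x z cc j : forall d c,
  realizes c (AC (ctlq SqClear) fi hi fq0 hq0 x d z cc j) ->
  realizes (iter d.+1 stp c) (AC (ctlq NextRound) fi hi fq0 hq0 x 0 z cc j).
Proof.
elim => [|d IH] c H; first by rewrite /=; run_ctl H.
by rewrite iterSr; apply: IH; run_ctl H.
Qed.

Lemma nextround_go fi hi f h x y z cc j c :
  realizes c (AC (ctlq NextRound) fi hi f h x y z cc j) ->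
  realizes (stp c) (AC (ctlq Round) fi hi f h x y z cc j.-1).
Proof. by move=> H; run_ctl H. Qed.

Definition query_size (x : nat) := size (phi (nseq x false)).

Lemma round_correct fi hi x j c :
  realizes c (AC (ctlq Round) fi hi (fun _ => None) 0 x 0 0 0 j.+1) ->
  exists2 t, t <= 9 * clock_step query_size x &
    realizes (iter t stp c)
      (AC (ctlq Round) fi hi (fun _ => None) 0 (clock_step query_size x) 0 0 0 j).
Proof.
move=> H; rewrite -[c]/(iter 0 stp c) in H.
have {}H := round_go H; norm_acfg H.
have {}H := writeq_loop H; norm_acfg H.
have {}H := restorex_loop H; norm_acfg H.
have {}H := realizes_query H; norm_acfg H.
have {}H := answer_go H; norm_acfg H.
set w := map Some (phi (nseq x false)) in H.
have Hw i : i < size w -> nth None w i <> None.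
  by move=> Hi; rewrite (nth_map false) // -(size_map Some).
have {}H := eraseans_loop (h := 0) (add0n _) Hw H; rewrite !add0n -iterD in H.
have {}H := eraseans_exit H; norm_acfg H.
have {}H := rewindq_loop H; norm_acfg H.
have {}H := padq1_go H; norm_acfg H.
have {}H := padq2_go H; norm_acfg H.
have {}H := sqsplit_loop H; norm_acfg H.
have {}H := sqouter_loop H; norm_acfg H.
have {}H := sqouter_exit H; norm_acfg H.
have {}H := sqclear_loop H; norm_acfg H.
have {}H := nextround_go H; norm_acfg H.
rewrite /w size_map in H.
have -> : clock_step query_size x = (x + query_size x).+2 * (x + query_size x).+2.
  by rewrite /clock_step; lia.
by eexists; last exact: H; rewrite /query_size; nia.
Qed.

Variable a : str.
Notation fa := (nth None (map Some a)).

Lemma realizes_init :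
  realizes (iter 1 stp (init clocked a)) (AC (inr (inl ord_max)) fa 0 (fun _ => None) 0 0 0 0 0 0).
Proof.
have init_size : size (init clocked a).2 = m + 5 by rewrite /= size_nseq /ntapes; lia.
rewrite /= step_ctl //; set R := ctl_next _ _; set ts := (init clocked a).2.
have reset i : 0 < i < m + 5 -> ctl_actions R (map read ts) i = (Some true, MoveS) ->
    counter (nth tape0 (ctl_tapes R ts) i) 0.
  case/andP=> Hi1 Hi2 Ei; rewrite nth_ctl_tapes // nth_init_tapes // Ei.
  by split => // -[|k] //=; rewrite nth_nil.
have [LX LY LZ LC LJ] := counters_lt.
split; split.
- by [].
- by rewrite size_mkseq.
- by rewrite nth_ctl_tapes ?addn5 // ctl_actions0 nth_map_read; apply: tape_repr_idle.
- rewrite nth_ctl_tapes ?addn5 // ctl_actions1 nth_map_read nth_init_tapes //.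
  exact/tape_repr_idle/tape_repr0.
- move=> i /andP [Hi1 Hi2]; rewrite nth_ctl_tapes; last lia.
  rewrite ctl_actions_work ?Hi1 ?Hi2 // nth_map_read nth_init_tapes; last lia.
  exact/tape_repr_idle/tape_repr0.
- by apply: reset; rewrite ?ctl_actionsX.
- by apply: reset; rewrite ?ctl_actionsY.
- by apply: reset; rewrite ?ctl_actionsZ.
- by apply: reset; rewrite ?ctl_actionsC.
- by apply: reset; rewrite ?ctl_actionsJ.
Qed.

Lemma setup_phase : exists2 t, t <= K + 2 * size a + 6 &
  realizes (iter t stp (init clocked a))
    (AC (ctlq Round) fa 0 (fun _ => None) 0 (size a).+2 0 0 0 K).
Proof.
have H := realizes_init.
have {}H := loadj_loop (r := K) (j := ord_max) erefl H; norm_acfg H.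
have {}H : realizes (iter (size a + (K.+1 + 1)) stp (init clocked a))
    (AC (ctlq CopyIn) fa (size a) (fun _ => None) 0 (size a) (size a) 0 0 K).
  by rewrite iterD; apply: (copyin_loop (h := 0)) H => i Hi; rewrite add0n (nth_map false).
have {}H := copyin_exit (nth_default _ (eq_leq (size_map Some a))) H; norm_acfg H.
have {}H := padin1_go H; norm_acfg H.
have {}H := padin2_go H; norm_acfg H.
have {}H := rewind_loop H; norm_acfg H.
by eexists; last exact: H; lia.
Qed.

Lemma rounds_phase c0 :
  realizes c0 (AC (ctlq Round) fa 0 (fun _ => None) 0 (size a).+2 0 0 0 K) ->
  forall k, k <= K -> exists2 t, t <= 9 * k * clock query_size (size a) k &
  realizes (iter t stp c0)
    (AC (ctlq Round) fa 0 (fun _ => None) 0 (clock query_size (size a) k) 0 0 0 (K - k)).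
Proof.
move=> H0; elim => [|k IH] Hk; first by exists 0; rewrite ?subn0.
have [t Ht H1] := IH (ltnW Hk).
rewrite (_ : K - k = (K - k.+1).+1) in H1; last lia.
have [t' Ht' H2] := round_correct H1.
have Eclock : clock query_size (size a) k.+1 = clock_step query_size (clock query_size (size a) k).
  by rewrite /clock iterS.
exists (t' + t); last by rewrite iterD Eclock.
by have := clock_mono query_size (size a) (leqnSn k); rewrite Eclock => ?; nia.
Qed.

(** * Simulation of [M] *)

Definition tapes_sim (ts ts' : seq tape) (v : nat) :=
  [/\ size ts = m, size ts' = m + 5,
      (forall i, i < m -> tape_eq (nth tape0 ts' i) (nth tape0 ts i)),
      counter (nth tape0 ts' Xi) v & counter (nth tape0 ts' Ji) 0].

Definition simulates (cM : config M) (c : config clocked) (v : nat) :=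
  c.1 = inl cM.1 /\ tapes_sim cM.2 c.2 v.

Lemma realizes_simulates c N y z cc :
  realizes c (AC (inl (otm_start M)) fa 0 (fun _ => None) 0 N y z cc 0) -> simulates (init M a) c N.
Proof.
case: c => q ts [[/= -> Hs [H0h H0] [H1h H1] Hw] [HX _ _ _ HJ]]; split => //; split => //=.
- by rewrite size_nseq.
- case=> [|[|i]] Hi; first by split => // j; rewrite H0.
    by split => // j; rewrite H1 nth_nil.
  have [Hh Hc] := Hw i.+2 Hi.
  by rewrite nth_init_tapes //; split => // j; rewrite Hc nth_nil.
Qed.

Lemma clock_phase : exists2 t, t <= K + 2 * size a + 7 + 9 * K * clock query_size (size a) K &
  simulates (init M a) (iter t stp (init clocked a)) (clock query_size (size a) K).
Proof.
have [t1 Ht1 H1] := setup_phase.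
have [t2 Ht2 H2] := rounds_phase H1 (leqnn K).
rewrite subnn -iterD in H2.
have H3 : realizes (stp (iter (t2 + t1) stp (init clocked a)))
    (AC (inl (otm_start M)) fa 0 (fun _ => None) 0 (clock query_size (size a) K) 0 0 0 0).
  by run_ctl H2.
by rewrite -iterS in H3; eexists; last exact: realizes_simulates H3; lia.
Qed.

Definition oracle_tapes (ts : seq tape) : seq tape :=
  set_nth tape0 ts 1 (encode (phi (contents (nth tape0 ts 1).1))).

Lemma tapes_sim_idle ts ts' v R : tapes_sim ts ts' v ->
  ca0 R = idle -> ca1 R = idle -> cox R <> CInit -> coj R = CKeep ->
  tapes_sim ts (ctl_tapes R ts') (cnt_eval (cox R) v).
Proof.
case=> Hs Hs' HT HX HJ H0 H1 NX HJk; have [LX _ _ _ LJ] := counters_lt.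
split; rewrite ?size_mkseq //.
- move=> i Hi; rewrite nth_ctl_tapes; last lia.
  by rewrite ctl_actions_idle // nth_map_read; apply: tape_eq_trans (tape_eq_idle _) (HT i Hi).
- by rewrite nth_ctl_tapes // ctl_actionsX nth_map_read; apply: counter_do.
- by rewrite nth_ctl_tapes // ctl_actionsJ nth_map_read HJk; apply: (counter_do (o := CKeep)).
Qed.

Lemma tapes_sim_oracle ts ts' v :
  tapes_sim ts ts' v -> tapes_sim (oracle_tapes ts) (oracle_tapes ts') v.
Proof.
case=> Hs Hs' HT HX HJ.
have C1 : contents (nth tape0 ts' 1).1 = contents (nth tape0 ts 1).1.
  by apply/tape_eq_contents/HT; rewrite /ntapes.
split; rewrite /oracle_tapes ?size_set_nth ?Hs ?Hs'; try by apply/maxn_idPr; rewrite /ntapes; lia.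
- by move=> i Hi; rewrite !nth_set_nth /= C1; case: eqP => // _; apply: HT.
- by rewrite nth_set_nth.
- by rewrite nth_set_nth.
Qed.

Lemma sim_step_query q ts ts' v : tapes_sim ts ts' v.+1 -> q != otm_halt M -> q == otm_query M ->
  simulates (step phi (q, ts)) (iter 3 stp (inl q, ts')) v.
Proof.
move=> sim Hh Hq; have [_ Hs' _ HX _] := sim.
have HX0 : at_zero (nth None (map read ts') Xi) = false.
  by rewrite nth_map_read /at_zero (counter_read HX).
pose RQ := CO (ctlq Query) idle idle CDec CKeep CKeep CKeep CKeep.
have E1 : stp (inl q, ts') = (ctlq Query, ctl_tapes RQ ts') by rewrite step_clocked //= HX0 Hq Hs'.
have sim1 := @tapes_sim_idle ts ts' v.+1 RQ sim erefl erefl ltac:(by []) erefl.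
have sim2 := tapes_sim_oracle sim1.
pose RA := goto (inl (otm_answer M)).
have E3 ts2 : size ts2 = m + 5 -> counter (nth tape0 ts2 Ji) 0 ->
    stp (ctlq Answer, ts2) = (inl (otm_answer M), ctl_tapes RA ts2).
  by move=> Hs2 HJ2; rewrite step_ctl // /ctl_next /at_zero (counter_read HJ2).
have [_ Hs2 _ _ HJ2] := sim2.
have -> : step phi (q, ts) = (otm_answer M, oracle_tapes ts) by rewrite /step /= (negbTE Hh) Hq.
rewrite /= E1 [stp (ctlq Query, _)]/step /= -/(oracle_tapes _) (E3 _ Hs2 HJ2).
by split => //; apply: tapes_sim_idle.
Qed.

Lemma take_map_read ts ts' : size ts = m -> size ts' = m + 5 ->
  (forall i, i < m -> tape_eq (nth tape0 ts' i) (nth tape0 ts i)) ->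
  take m (map read ts') = map read ts.
Proof.
move=> Hs Hs' HT; apply: (@eq_from_nth _ None).
  by rewrite size_takel ?size_map ?Hs ?Hs' //; lia.
move=> i; rewrite size_takel ?size_map ?Hs'; last lia.
by move=> Hi; rewrite nth_take // !nth_map_read; apply/tape_eq_read/HT.
Qed.

Lemma sim_step_plain q ts ts' v : tapes_sim ts ts' v.+1 -> q != otm_halt M -> q != otm_query M ->
  simulates (step phi (q, ts)) (stp (inl q, ts')) v.
Proof.
case=> Hs Hs' HT HX HJ Hh Hq; have [LX _ _ _ LJ] := counters_lt.
have HX0 : at_zero (nth None (map read ts') Xi) = false.
  by rewrite nth_map_read /at_zero (counter_read HX).
case E: (otm_delta q (map read ts)) => [q' acts].
have -> : step phi (q, ts) =
    (q', mkseq (fun i => do_action (nth (None, MoveS) acts i) (nth tape0 ts i)) m).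
  by rewrite /step /= (negbTE Hh) (negbTE Hq) E Hs.
rewrite step_clocked //= HX0 (negbTE Hq) (take_map_read Hs Hs' HT) E Hs' /=.
split => //; split; cbn [snd]; rewrite ?size_mkseq //.
- move=> i Hi; rewrite nth_mkseq_do; last lia.
  by rewrite nth_mkseq ?Hs // /sim_actions Hi; apply/tape_eq_do/HT.
- rewrite nth_mkseq_do // /sim_actions /Xi ltnn eqxx nth_map_read.
  exact: (counter_do (o := CDec) HX).
- rewrite nth_mkseq_do //.
  have -> : sim_actions acts (map read ts') Ji = (nth None (map read ts') Ji, MoveS).
    by rewrite /sim_actions /Ji /Xi; case: ltnP => [|_]; [lia | case: eqP => //; lia].
  by rewrite nth_map_read; apply: (counter_do (o := CKeep) HJ).
Qed.

Lemma sim_step cM c v : simulates cM c v.+1 -> cM.1 != otm_halt M ->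
  exists2 t, t <= 3 & simulates (step phi cM) (iter t stp c) v.
Proof.
case: cM c => q ts [q' ts'] [/= -> sim] Hh.
case Hq: (q == otm_query M); first by exists 3 => //; apply: sim_step_query.
by exists 1 => //; apply: sim_step_plain; rewrite ?Hq.
Qed.

Lemma sim_halts v cM c : simulates cM c v ->
  exists2 t, t <= 3 * v + 1 & (iter t stp c).1 = inl (otm_halt M).
Proof.
elim: v cM c => [|v IH] cM c H; case Hh: (cM.1 == otm_halt M);
  try by exists 0 => //; case: H => -> _; rewrite (eqP Hh).
- case: cM c H Hh => q ts [q' ts'] [/= -> [_ Hs' _ HX _]] Hh; exists 1 => //.
  rewrite /= step_clocked; [|exact: negbT Hh|by []].
  by rewrite /clocked_delta nth_map_read /at_zero (counter_read HX).
- have [t1 Ht1 H1] := sim_step H (negbT Hh).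
  have [t2 Ht2 H2] := IH _ _ H1.
  by exists (t2 + t1); [lia | rewrite iterD].
Qed.

Lemma sim_run cM c v : simulates cM c v -> forall t, t <= v ->
  exists s v', v - t <= v' /\ simulates (iter t (step phi) cM) (iter s stp c) v'.
Proof.
move=> H; elim => [|t IH] Ht; first by exists 0, v; rewrite subn0.
have [s [v' [Hv H1]]] := IH (ltnW Ht).
case Hh: ((iter t (step phi) cM).1 == otm_halt M).
  have -> : iter t.+1 (step phi) cM = iter t (step phi) cM := iter_step_halted phi 1 (eqP Hh).
  by exists s, v'; split; [lia | ].
case: v' Hv H1 => [|v'] Hv H1; first lia.
have [t1 _ H2] := sim_step H1 (negbT Hh).
by exists (t1 + s), v'; split; [lia | rewrite iterD iterS].
Qed.

End Phases.
End ClockedMachine.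

(** * The polynomial-time extension *)

Section Extension.
Variables (M : OTM) (P : sopoly).
Notation K := (sopoly_weight P).
Notation MK := (clocked M K).

(* Setup, then K rounds of at most 9 N steps each, then at most 3 steps per simulated step of
   [M], where N is the final clock value. *)
Definition clocked_time : sopoly :=
  SPadd (SPmul (SPconst (9 * K + 5)) (clock_sopoly K)) (SPconst (K + 8)).

Definition clocked_fun (phi : str -> str) (a : str) : str :=
  output (run MK phi a (sopoly_eval clocked_time (size_fun phi) (size a))).

Lemma eval_clocked_time l n : sopoly_eval clocked_time l n = (9 * K + 5) * clock l n K + (K + 8).
Proof. by rewrite /clocked_time; cbn [sopoly_eval]; rewrite eval_clock_sopoly !eval_SPconst. Qed.

Lemma query_clock_le phi n : clock (query_size phi) n K <= clock (size_fun phi) n K.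
Proof.
by apply: clock_le; [move=> x; apply: size_fun_ge; rewrite size_nseq | apply: size_fun_mono].
Qed.

Lemma query_clock_eq phi n : length_monotone phi ->
  clock (query_size phi) n K = clock (size_fun phi) n K.
Proof.
by move=> Hm; congr clock; apply: functional_extensionality => x; rewrite size_fun_monotone.
Qed.

Lemma clocked_halts phi a :
  (run MK phi a (sopoly_eval clocked_time (size_fun phi) (size a))).1 = otm_halt MK.
Proof.
have [t1 Ht1 H1] := clock_phase M K phi a.
have [t2 Ht2 H2] := sim_halts phi H1; rewrite -iterD in H2.
have le_clock := query_clock_le phi (size a).
have ge_size := clock_ge_size (query_size phi) (size a) K.
have HT : t2 + t1 <= sopoly_eval clocked_time (size_fun phi) (size a).
  by rewrite eval_clocked_time; nia.
by rewrite /run (iter_step_halted_le HT H2).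
Qed.

Lemma clocked_simulates phi a T : T <= clock (query_size phi) (size a) K ->
  (run M phi a T).1 = otm_halt M ->
  exists t, (iter t (step phi) (init MK a)).1 = otm_halt MK /\
            output (iter t (step phi) (init MK a)) = output (run M phi a T).
Proof.
move=> HT halted; have [t1 _ H1] := clock_phase M K phi a.
have [s [v [_ [Hq [_ _ HT2 _ _]]]]] := sim_run phi H1 HT.
exists (s + t1); rewrite iterD; split; first by rewrite Hq halted.
by apply: tape_eq_contents; apply: HT2; rewrite /ntapes.
Qed.

Lemma clocked_fun_correct F phi a : computes_in_time length_monotone F M P ->
  length_monotone phi -> clocked_fun phi a = F phi a.
Proof.
move=> HMP Hm; have [halted <-] := HMP phi Hm a.
have HT : sopoly_eval P (size_fun phi) (size a) <= clock (query_size phi) (size a) K.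
  by rewrite query_clock_eq //; apply/sopoly_le_clock/size_fun_mono.
have [t [halted' <-]] := clocked_simulates HT halted.
by rewrite /clocked_fun /run (iter_step_halted_eq (clocked_halts phi a) halted').
Qed.

End Extension.

Theorem mainTheorem9 (F : (str -> str) -> str -> str) :
  restricted_polytime length_monotone F <->
  exists G : (str -> str) -> str -> str,
    polytime G /\
    (forall phi, length_monotone phi -> forall a : str, G phi a = F phi a).
Proof.
split=> [[M [P HMP]] | [G [[M [P HG]] GF]]].
- exists (clocked_fun M P); split; last by move=> phi Hm a; apply: clocked_fun_correct.
  exists (clocked M (sopoly_weight P)), (clocked_time P) => phi _ a.
  by split; last by []; apply: clocked_halts.
- by exists M, P => phi Hm a; have [halted out] := HG phi I a; split; rewrite // -GF.
Qed.
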